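(* Fix range parameters $0<L_I\le U_I$ and $0\le L_V\le U_V$, and let $\alpha=(a_1,\dots,a_w)$. Let $a_i\in\mathbb{L}^{t+1}_\alpha$. Suppose $a_k$ is the leftmost non-black item of $\mathbb{L}^t_\alpha$ satisfying $L_V\le a_i-a_k$ and $i-k\le U_I$; that is, $a_k$ is the leftmost partially-proper item of $a_i$. Then $a_i$ has a range-proper predecessor if and only if $a_k$ is a range-proper predecessor of $a_i$.
   Context: Let $\alpha=(a_1,\dots,a_w)$ be a finite sequence of real numbers, with items identified by their positions. Increasing subsequences are non-strict. $a_j$ is compatible with $a_i$ if $j<i$ and $a_j\le a_i$. $RL_\alpha(a)$ is the maximum length of an increasing subsequence ending at $a$. $a_j$ is a predecessor of $a_i$ if it is compatible with $a_i$ and $RL_\alpha(a_j)=RL_\alpha(a_i)-1$. The horizontal list $\mathbb{L}^t_\alpha$ is the list of items of rising length $t$, ordered by position; ''left of'' means earlier position. Items are colored black or non-black recursively by level: all items of $\mathbb{L}^1_\alpha$ are non-black, and an item of $\mathbb{L}^{t+1}_\alpha$ is non-black iff it has a range-proper predecessor. Here a range-proper predecessor of $a_i$ is a non-black predecessor $a_k$ with $L_V\le a_i-a_k\le U_V$ and $L_I\le i-k\le U_I$. *)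

(* Sequence alpha = s : seq R over a real domain R,
   items identified by 0-based positions i < size s (index differences
   are shift-invariant, so this matches the paper's 1-based positions). *)
From HB Require Import structures.
From mathcomp Require Import all_boot all_order all_algebra.
Set Implicit Arguments. Unset Strict Implicit. Unset Printing Implicit Defensive.
Import Order.TTheory GRing.Theory Num.Theory.
Local Open Scope ring_scope.

Section Defs.
Variable R : realDomainType.
Variable s : seq R.

Definition item (i : nat) : R := nth 0 s i.

Definition incr_ending (S : {set 'I_(size s)}) (i : nat) : bool :=
  [&& [exists x in S, val x == i],
      [forall x in S, (val x <= i)%N] &
      [forall x in S, forall y in S, (val x < val y)%N ==> (item x <= item y)]].

Definition RL (i : nat) : nat :=
  \max_(S : {set 'I_(size s)} | incr_ending S i) #|S|.

Definition compatible (j i : nat) : bool := (j < i)%N && (item j <= item i).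

Definition predecessor (j i : nat) : bool :=
  compatible j i && (RL j == (RL i).-1)%N.

Variables (LI UI : nat) (LV UV : R).

Definition in_range (k i : nat) : bool :=
  [&& LV <= item i - item k, item i - item k <= UV,
      (LI <= i - k)%N & (i - k <= UI)%N].

(* recursive colouring; fuel bounds the recursion (predecessors lie strictly left) *)
Fixpoint nonblack_fuel (fuel : nat) (i : nat) : bool :=
  match fuel with
  | 0 => false
  | f.+1 => (RL i == 1)%N ||
      [exists k : 'I_(size s),
         [&& predecessor k i, nonblack_fuel f k & in_range k i]]
  end.

Definition nonblack (i : nat) : bool := nonblack_fuel i.+1 i.

Definition range_proper (k i : nat) : bool :=
  [&& (k < size s)%N, predecessor k i, nonblack k & in_range k i].

End Defs.

(* Rising lengths strictly increase along compatible pairs, so items of one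
   horizontal list decrease from left to right.  Hence the leftmost
   partially-proper item a_k of a_i lies weakly left of any range-proper
   predecessor a_k' and carries a value at least as large: a_i - a_k is then
   no larger and i - k no smaller than for a_k', so the remaining range bounds
   transfer from a_k' to a_k. *)
From HB Require Import structures.
From mathcomp Require Import all_boot all_order all_algebra.
Import Order.TTheory GRing.Theory Num.Theory.
Local Open Scope ring_scope.

Section RisingLength.
Context {R : realDomainType} {s : seq R}.

Lemma incr_ending1 (j : nat) (js : (j < size s)%N) :
  incr_ending [set Ordinal js] j.
Proof.
apply/and3P; split.
- by apply/existsP; exists (Ordinal js); rewrite set11 /=.
- by apply/forallP => x; apply/implyP; rewrite in_set1 => /eqP ->.
- apply/forallP => x; apply/implyP; rewrite in_set1 => /eqP ->.
  by apply/forallP => y; apply/implyP; rewrite in_set1 => /eqP ->; rewrite ltnn.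
Qed.

Lemma RL_witness {j : nat} : (j < size s)%N ->
  exists2 S : {set 'I_(size s)}, incr_ending S j & RL s j = #|S|.
Proof.
move=> js; rewrite /RL.
have ne : (0 < #|[pred S : {set 'I_(size s)} | incr_ending S j]|)%N.
  by apply/card_gt0P; exists [set Ordinal js]; apply: incr_ending1.
have [S hS ->] := eq_bigmax_cond (fun S : {set 'I_(size s)} => #|S|) ne.
by exists S.
Qed.

Lemma incr_ending_setU1 (S : {set 'I_(size s)}) (j : nat) (l : 'I_(size s)) :
  incr_ending S j -> (j < l)%N -> item s j <= item s l ->
  incr_ending (l |: S) l /\ l \notin S.
Proof.
case/and3P => /existsP [w /andP [wS /eqP wj]] /forallP hle /forallP hinc jl hv.
have ltl x : x \in S -> (x < l)%N.
  by move=> xS; move: (hle x); rewrite xS /= => xj; apply: leq_ltn_trans xj jl.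
have lej x : x \in S -> item s x <= item s j.
  move=> xS; move: (hle x); rewrite xS /= leq_eqVlt => /orP [/eqP -> //|xj].
  by move: (hinc x); rewrite xS /= => /forallP /(_ w); rewrite wS wj xj /=.
split; last by apply/negP => /ltl; rewrite ltnn.
apply/and3P; split.
- by apply/existsP; exists l; rewrite setU11 /=.
- apply/forallP => x; apply/implyP; rewrite in_setU1.
  by case/orP => [/eqP -> //|/ltl/ltnW].
- apply/forallP => x; apply/implyP; rewrite in_setU1 => /orP [/eqP ->|xS].
    apply/forallP => y; apply/implyP; rewrite in_setU1.
    case/orP => [/eqP ->|/ltl yl]; first by rewrite ltnn.
    by apply/implyP => /(ltn_trans yl); rewrite ltnn.
  apply/forallP => y; apply/implyP; rewrite in_setU1 => /orP [/eqP ->|yS].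
    by apply/implyP => _; apply: le_trans (lej x xS) hv.
  by move: (hinc x); rewrite xS /= => /forallP /(_ y); rewrite yS.
Qed.

Lemma RL_lt_compatible {j l : nat} :
  (l < size s)%N -> compatible s j l -> (RL s j < RL s l)%N.
Proof.
move=> ls /andP [jl hv].
have [S hS ->] := RL_witness (ltn_trans jl ls).
have [hL LnS] := @incr_ending_setU1 S j (Ordinal ls) hS jl hv.
have := @leq_bigmax_cond _ (fun S => incr_ending S l) (fun S => #|S|) _ hL.
by rewrite cardsU1 LnS.
Qed.

Lemma item_lt_RL_eq {j l : nat} :
  (j < l)%N -> (l < size s)%N -> RL s j = RL s l -> item s l < item s j.
Proof.
move=> jl ls eqRL; rewrite ltNge; apply/negP => hv.
by have := RL_lt_compatible ls (introT andP (conj jl hv)); rewrite eqRL ltnn.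
Qed.

End RisingLength.

Lemma range_proper_leftward {R : realDomainType} {LI UI : nat} {LV UV : R}
    {s : seq R} {i k k' : nat} :
  0 <= LV -> (k <= k')%N -> (k < size s)%N -> RL s k = RL s k' ->
  nonblack s LI UI LV UV k -> LV <= item s i - item s k -> (i - k <= UI)%N ->
  range_proper s LI UI LV UV k' i -> range_proper s LI UI LV UV k i.
Proof.
move=> hLV kk' ks eqRL nbk hkV hkI.
case/and4P=> k's /andP [/andP [k'i _] /eqP hRL'] _ /and4P [_ hUV hLI _].
have ki : (k < i)%N := leq_ltn_trans kk' k'i.
have hvk : item s k' <= item s k.
  move: kk'; rewrite leq_eqVlt => /orP [/eqP -> //|lt].
  exact: ltW (item_lt_RL_eq lt k's eqRL).
apply/and4P; split => //.
  rewrite /predecessor /compatible ki eqRL hRL' eqxx andbT /=.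
  by rewrite -subr_ge0; apply: le_trans hLV hkV.
apply/and4P; split => //.
- by apply: le_trans hUV; rewrite lerD2l lerN2.
- exact: leq_trans hLI (leq_sub2l i kk').
Qed.

Theorem mainTheorem13 (R : realDomainType) (LI UI : nat) (LV UV : R)
  (hLI : (0 < LI)%N) (hI : (LI <= UI)%N) (hLV : 0 <= LV) (hV : LV <= UV)
  (s : seq R) (t i k : nat)
  (hi : (i < size s)%N) (hRLi : RL s i = t.+1)
  (hk : (k < size s)%N) (hRLk : RL s k = t)
  (hknb : nonblack s LI UI LV UV k)
  (hkV : LV <= item s i - item s k) (hkI : (i - k <= UI)%N)
  (hleft : forall k' : nat, (k' < size s)%N -> RL s k' = t ->
     nonblack s LI UI LV UV k' -> LV <= item s i - item s k' ->
     (i - k' <= UI)%N -> (k <= k')%N) :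
  (exists k' : nat, range_proper s LI UI LV UV k' i) <->
  range_proper s LI UI LV UV k i.
Proof.
split=> [[k' hk'] | hk']; last by exists k.
have /and4P [k's /andP [_ /eqP hRL'] nb' /and4P [hV' _ _ hI']] := hk'.
rewrite hRLi /= in hRL'.
apply: (range_proper_leftward hLV (hleft k' k's hRL' nb' hV' hI')) hk' => //.
by rewrite hRLk hRL'.
Qed.
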